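(* Let $\mu$ be a non-uniform Bernoulli measure on $\Sigma=\{1,\dots,K\}^{\mathbb N}$ and let $g:\mathbb N\to[1,\infty)$ be a function with $\limsup_{n\to\infty}\frac{g(n)}{\sqrt{\log\log n}}\le1$ and $\lim_{n\to\infty}g(n)=\infty$. Then there exists a sequence of positive integers $(n_k)_{k\ge1}$ such that $$\mu\left(\left\{\mathbf i\in\Sigma:\limsup_{k\to\infty}\frac{\log\mu([\mathbf i|_1^{n_k}])+h_\mu n_k}{\sqrt{2\rho_\mu n_k}\,g(n_k)}\le\frac12\right\}\right)=1.$$
   Context: Let $K\ge2$ and $\Sigma=\{1,\dots,K\}^{\mathbb N}$. For $\mathbf i\in\Sigma$, $[\mathbf i|_1^n]$ denotes the cylinder of sequences whose first $n$ terms are $i_1,\dots,i_n$. For a probability vector $(p_i)_{i=1}^K$, the Bernoulli measure $\mu$ assigns $[i_1\dots i_n]$ measure $p_{i_1}\cdots p_{i_n}$; it is non-uniform if $p_i\ne1/K$ for some $i$. Entropy $h_\mu=-\sum_ip_i\log p_i$, variance $\rho_\mu=\sum_ip_i(\log p_i)^2-(\sum_ip_i\log p_i)^2$. Convention: $\log x=0$ for $x\le1$. *)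

From HB Require Import structures.
From mathcomp Require Import all_boot all_order all_algebra.
From mathcomp Require Import all_classical all_reals all_analysis.

Set Implicit Arguments.
Unset Strict Implicit.
Unset Printing Implicit Defensive.

Import Order.TTheory GRing.Theory Num.Theory.
Local Open Scope classical_set_scope.
Local Open Scope ring_scope.

(* Alphabet with K symbols (K >= 1), written 'I_(K.-1).+1 so that it is
   canonically pointed; for K >= 1 this is exactly 'I_K = {0,...,K-1},
   i.e. the symbols {1,...,K} shifted by one. *)
Definition Alph (K : nat) : Type := 'I_(K.-1).+1.
HB.instance Definition _ K := Finite.on (Alph K).
HB.instance Definition _ K := isPointed.Build (Alph K) ord0.

Definition Seqs (K : nat) : Type := nat -> Alph K.

Definition cyl (K : nat) (i : Seqs K) (n : nat) : set (Seqs K) :=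
  [set j | forall m, (m < n)%N -> j m = i m].

Definition cylinders (K : nat) : set (set (Seqs K)) :=
  [set A | exists i n, A = cyl i n].

(* Sigma with the sigma-algebra generated by the cylinders (the Borel
   sigma-algebra of the product topology). *)
Definition Sigma (K : nat) := g_sigma_algebraType (@cylinders K).

(* mu is the Bernoulli measure of the probability vector p: it gives the
   cylinder [i_1...i_n] mass p_{i_1}...p_{i_n}.  (By the pi-lambda theorem
   this determines mu uniquely on the cylinder sigma-algebra.) *)
Definition is_bernoulli {R : realType} (K : nat) (p : Alph K -> R)
  (mu : probability (Sigma K) R) : Prop :=
  forall (i : Sigma K) (n : nat),
    mu (cyl i n) = (\prod_(m < n) p (i m))%:E.

Definition is_prob_vector {R : realType} (K : nat) (p : Alph K -> R) : Prop :=
  (forall a, 0 < p a) /\ \sum_a p a = 1.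

Definition non_uniform {R : realType} (K : nat) (p : Alph K -> R) : Prop :=
  exists a, p a != K%:R^-1.

Definition bern_entropy {R : realType} (K : nat) (p : Alph K -> R) : R :=
  - \sum_a p a * ln (p a).

Definition bern_variance {R : realType} (K : nat) (p : Alph K -> R) : R :=
  \sum_a p a * (ln (p a)) ^+ 2 - (\sum_a p a * ln (p a)) ^+ 2.

(* Convention of the paper: log x = 0 for x <= 1. *)
Definition logc {R : realType} (x : R) : R := if x <= 1 then 0 else ln x.

Definition loglog {R : realType} (n : nat) : R := logc (logc (n%:R : R)).

From HB Require Import structures.
From mathcomp Require Import all_boot all_order all_algebra.
From mathcomp Require Import all_classical all_reals all_analysis.
From mathcomp Require Import ring lra measurable_realfun.
Import Order.TTheory GRing.Theory Num.Theory.
Local Open Scope classical_set_scope.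
Local Open Scope ring_scope.
Set Implicit Arguments.
Unset Strict Implicit.

(* Write log mu([i|_1^n]) + h n = S_n(i), a sum of n i.i.d. centred variables
   log p_(i_m) + h of variance rho.  By Chebyshev, S_n > sqrt(2 rho n) g(n) / 2
   has probability at most 2 / g(n)^2, so along a subsequence with
   g(n_k) >= 2^(k+1) these events have summable probabilities and, by
   Borel-Cantelli, almost every i eventually avoids them; then the normalised
   ratio is at most 1/2 for all large k. *)

Section IidSums.
Variables (R : comPzRingType) (A : finType) (q X : A -> R).
Hypotheses (q1 : \sum_a q a = 1) (qX0 : \sum_a q a * X a = 0).

Lemma iid_cross_moment n (m1 m2 : 'I_n) :
  \sum_(w : {ffun 'I_n -> A}) (\prod_(m < n) q (w m)) * (X (w m1) * X (w m2))
  = if m1 == m2 then \sum_a q a * X a ^+ 2 else 0.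
Proof.
(* The summand factorises over the coordinates, so the sum over words is a
   product of one-letter sums. *)
pose F m a := q a * (if m == m1 then X a else 1) * (if m == m2 then X a else 1).
have prodF (w : {ffun 'I_n -> A}) :
    (\prod_(m < n) q (w m)) * (X (w m1) * X (w m2)) = \prod_m F m (w m).
  by rewrite !big_split /= -!big_mkcond /= !big_pred1_eq mulrA.
under eq_bigr do rewrite prodF.
rewrite -(bigA_distr_bigA F) (bigD1 m1) //= /F eqxx.
have [<-|/eqP m12] := eqP.
  rewrite [\prod_(_ < _ | _) _]big1 ?mulr1; last first.
    by move=> m /negbTE ->; under eq_bigr do rewrite !mulr1.
  by apply: eq_bigr => a _; rewrite -mulrA expr2.
by under eq_bigr do rewrite mulr1; rewrite qX0 mul0r.
Qed.

Lemma iid_sum_second_moment n :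
  \sum_(w : {ffun 'I_n -> A}) (\prod_(m < n) q (w m)) * (\sum_(m < n) X (w m)) ^+ 2
  = n%:R * \sum_a q a * X a ^+ 2.
Proof.
have expand (w : {ffun 'I_n -> A}) :
    (\prod_(m < n) q (w m)) * (\sum_(m < n) X (w m)) ^+ 2
    = \sum_(m1 < n) \sum_(m2 < n) (\prod_(m < n) q (w m)) * (X (w m1) * X (w m2)).
  rewrite expr2 big_distrl big_distrr /=; apply: eq_bigr => m1 _.
  by rewrite big_distrr big_distrr /=; apply: eq_bigr => m2 _; rewrite mulrA.
under eq_bigr do rewrite expand.
rewrite exchange_big /=; under eq_bigr do rewrite exchange_big /=.
under eq_bigr do under eq_bigr do rewrite iid_cross_moment.
have diag (m1 : 'I_n) :
    \sum_(m2 < n) (if m1 == m2 then \sum_a q a * X a ^+ 2 else 0) = \sum_a q a * X a ^+ 2.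
  by rewrite -big_mkcond (big_pred1 m1) // => m2; rewrite /= eq_sym.
under eq_bigr do rewrite diag.
by rewrite sumr_const card_ord mulr_natl.
Qed.

End IidSums.

Lemma iid_sum_chebyshev (R : realFieldType) (A : finType) (q X : A -> R) n c :
  (forall a, 0 <= q a) -> \sum_a q a = 1 -> \sum_a q a * X a = 0 -> 0 < c ->
  \sum_(w : {ffun 'I_n -> A} | c < \sum_(m < n) X (w m)) \prod_(m < n) q (w m)
    <= n%:R * (\sum_a q a * X a ^+ 2) / c ^+ 2.
Proof.
move=> q0 q1 qX0 c0.
rewrite -iid_sum_second_moment // mulr_suml big_mkcond /=.
apply: ler_sum => w _; have qw0 : 0 <= \prod_(m < n) q (w m) by apply: prodr_ge0.
case: ifP => [cS|_]; last by rewrite divr_ge0 ?sqr_ge0 // mulr_ge0 ?sqr_ge0.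
rewrite -mulrA ler_peMr // ler_pdivlMr ?exprn_gt0 // mul1r.
by rewrite lerXn2r ?nnegrE ?ltW // (lt_trans c0 cS).
Qed.

Lemma chebyshev_normalised_bound (R : rcfType) (rho n g y : R) :
  0 < rho -> 0 < n -> 2 <= y -> y <= g ->
  n * rho / (Num.sqrt (2 * rho * n) * g / 2) ^+ 2 <= y^-1.
Proof.
move=> rho0 n0 y2 yg; have g0 : 0 < g by lra.
rewrite expr_div_n exprMn sqr_sqrtr; last by rewrite !mulr_ge0 ?ltW.
have -> : n * rho / (2 * rho * n * g ^+ 2 / 2 ^+ 2) = 2 / g ^+ 2.
  by field; rewrite !lt0r_neq0.
rewrite ler_pdivrMr ?exprn_gt0 // mulrC ler_pdivlMr; nra.
Qed.

Lemma fsbig_finType (R : Type) (idx : R) (op : Monoid.com_law idx) (T : finType)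
    (A : set T) (f : T -> R) :
  \big[op/idx]_(i \in A) f i = \big[op/idx]_(i | i \in A) f i.
Proof.
rewrite fsbig_mkcond (fsbigE (enum T)) ?enum_uniq // => [|i _]; last by rewrite mem_enum.
rewrite big_enum_cond [RHS]big_mkcond; apply: eq_big => [i|i _]; first by rewrite in_setT.
by rewrite /patch; case: ifP.
Qed.

Lemma ln_prod (R : realType) (I : Type) (s : seq I) (P : pred I) (F : I -> R) :
  (forall i, P i -> 0 < F i) ->
  ln (\prod_(i <- s | P i) F i) = \sum_(i <- s | P i) ln (F i).
Proof.
move=> F0; rewrite (eq_bigr (fun i => expR (ln (F i)))) => [|i /F0 Fi]; last by rewrite lnK.
by rewrite -expR_sum expRK.
Qed.

Lemma cvgry_subseq (R : realType) (g b : nat -> R) : g @ \oo --> +oo ->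
  exists nk : nat -> nat, (forall k, (0 < nk k)%N) /\ forall k, b k <= g (nk k).
Proof.
move=> /cvgryPge g_oo.
have [nk hnk] : {nk : nat -> nat & forall k, (0 < nk k)%N /\ b k <= g (nk k)}.
  apply: (@choice _ _ (fun k n => (0 < n)%N /\ b k <= g n)) => k.
  have [N _ gN] := g_oo (b k).
  by exists N.+1; split => //; apply: gN => /=.
by exists nk; split => k; case: (hnk k).
Qed.

Lemma limn_esup_le_near (R : realType) (u : (\bar R)^nat) (a : \bar R) :
  (\forall k \near \oo, (u k <= a)%E) -> (limn_esup u <= a)%E.
Proof.
move=> [N _ uN]; rewrite limn_esup_lim; apply: lime_le; first exact: is_cvg_esups.
near=> m; apply: ge_ereal_sup => _ [k /= mk <-]; apply: uN => /=.
by apply: leq_trans mk; near: m; exists N.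
Unshelve. all: by end_near.
Qed.

Lemma probability_eventually_avoided d (T : measurableType d) (R : realType)
    (P : probability T R) (E : (set T)^nat) (A : set T) :
  (forall k, measurable (E k)) -> (forall k, (P (E k) <= ((2 ^ k.+1)%:R^-1)%:E)%E) ->
  measurable A -> (forall x, (\forall k \near \oo, ~ E k x) -> A x) -> P A = 1%E.
Proof.
move=> mE PE mA avoidA.
have summable : (\sum_(k <oo) P (E k) < +oo)%E.
  apply: le_lt_trans (ltry 1); apply: le_trans (epsilon_trick0 xpredT ler01).
  by apply: lee_nneseries => // k _; rewrite div1r.
have limsup_null := lim_sup_set_cvg0 mE summable.
have notA_limsup : ~` A `<=` lim_sup_set E.
  move=> x notAx n _; apply: contrapT => notE; apply: notAx; apply: avoidA.
  by exists n => // k /= nk; apply: contra_not notE => Ekx; exists k.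
have notA_null : P (~` A) = 0%E.
  apply/eqP; rewrite eq_le measure_ge0 andbT -limsup_null.
  apply: le_measure => //; rewrite inE; first exact: measurableC.
  by apply: bigcap_measurable => [|n _]; [exists 0%N | exact: bigcup_measurable].
apply/eqP; rewrite eq_le probability_le1 //=.
by rewrite -sube_le0 -probability_setC // notA_null.
Qed.

Section PrefixEvents.
Variable K : nat.

Definition prefix_eq n (i j : Sigma K) := forall m, (m < n)%N -> i m = j m.

Definition prefix_determined n (E : set (Sigma K)) :=
  forall i j, prefix_eq n i j -> E i -> E j.

Definition word_seq n (w : {ffun 'I_n -> Alph K}) : Sigma K :=
  fun m => if insub m is Some j then w j else ord0.

Lemma word_seqE n (w : {ffun 'I_n -> Alph K}) (j : 'I_n) : word_seq w j = w j.
Proof. by rewrite /word_seq valK. Qed.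

Lemma prefix_eq_word_seq n (i : Sigma K) :
  prefix_eq n (word_seq [ffun j : 'I_n => i j]) i.
Proof. by move=> m mn; rewrite /word_seq insubT ffunE. Qed.

Lemma prefix_eq_sum (V : nmodType) (F : Alph K -> V) n (i j : Sigma K) :
  prefix_eq n i j -> \sum_(m < n) F (i m) = \sum_(m < n) F (j m).
Proof. by move=> ij; apply: eq_bigr => m _; rewrite ij. Qed.

Lemma cyl_measurable (i : Sigma K) n : measurable (cyl i n : set (Sigma K)).
Proof. by apply: sub_gen_smallest; exists i, n. Qed.

Lemma prefix_determined_cover n (E : set (Sigma K)) : prefix_determined n E ->
  E = \bigcup_(w in [set w : {ffun 'I_n -> Alph K} | E (word_seq w)])
        cyl (word_seq w) n.
Proof.
move=> dE; apply/seteqP; split=> [i Ei|i [w /= Ew iw]].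
  exists [ffun j : 'I_n => i j]; last by move=> m mn; rewrite prefix_eq_word_seq.
  by apply: dE Ei => m mn; rewrite prefix_eq_word_seq.
by apply: dE Ew => m mn; rewrite iw.
Qed.

Lemma prefix_determined_measurable n (E : set (Sigma K)) :
  prefix_determined n E -> measurable E.
Proof.
move=> dE; rewrite (prefix_determined_cover dE).
by apply: fin_bigcup_measurable => [|w _]; [exact: finite_finset | exact: cyl_measurable].
Qed.

Lemma prefix_determined_measurable_fun n d (T : measurableType d) (f : Sigma K -> T) :
  (forall i j, prefix_eq n i j -> f i = f j) -> measurable_fun setT f.
Proof.
move=> df _ B _; rewrite setTI; apply: (@prefix_determined_measurable n) => i j ij.
by rewrite /preimage /= (df _ _ ij).
Qed.

Lemma prefix_determined_limn_esup_le (R : realType) (N : nat -> nat)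
    (f : nat -> Sigma K -> R) (a : \bar R) :
  (forall k i j, prefix_eq (N k) i j -> f k i = f k j) ->
  measurable [set i : Sigma K | (limn_esup (fun k => (f k i)%:E) <= a)%E].
Proof.
move=> df; have mf : measurable_fun setT (fun i => limn_esup (fun k => (f k i)%:E)).
  apply: measurable_fun_limn_esup => k.
  by apply: (@prefix_determined_measurable_fun (N k)) => i j ij; rewrite (df _ _ _ ij).
have := mf measurableT _ (emeasurable_itv `]-oo, a]).
by rewrite setTI; congr measurable; apply/seteqP; split => i /=; rewrite in_itv.
Qed.

End PrefixEvents.

Section BernoulliSums.
Variables (R : realType) (K : nat) (p : Alph K -> R) (mu : probability (Sigma K) R).
Hypotheses (hp : is_prob_vector p) (hmu : is_bernoulli p mu).

Lemma bernoulli_prefix_determined_le n (E : set (Sigma K)) : prefix_determined n E ->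
  (mu E <= (\sum_(w : {ffun 'I_n -> Alph K} | word_seq w \in E)
              \prod_(m < n) p (w m))%:E)%E.
Proof.
move=> dE; have mE := prefix_determined_measurable dE.
apply: le_trans (content_sub_fsum mu (D := [set w | E (word_seq w)]) finite_finset
  (fun w _ => cyl_measurable (word_seq w) n) mE _) _.
  by move=> i; rewrite {1}(prefix_determined_cover dE); apply.
rewrite fsbig_finType.
rewrite (eq_bigr (fun w : {ffun 'I_n -> Alph K} => (\prod_(m < n) p (w m))%:E)) => [|w _].
  by rewrite sumEFin lee_fin (eq_bigl (fun w => word_seq w \in E)).
by have := hmu (word_seq w) n; under eq_bigr do rewrite word_seqE.
Qed.

Definition centred_log (a : Alph K) := ln (p a) + bern_entropy p.

Lemma centred_log_mean : \sum_a p a * centred_log a = 0.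
Proof.
case: hp => _ p1; under eq_bigr do rewrite mulrDr.
by rewrite big_split /= -mulr_suml p1 mul1r /bern_entropy subrr.
Qed.

Lemma centred_log_variance : \sum_a p a * centred_log a ^+ 2 = bern_variance p.
Proof.
case: hp => _ p1; set h := bern_entropy p.
have expand a : p a * centred_log a ^+ 2
    = p a * ln (p a) ^+ 2 + 2 * h * (p a * ln (p a)) + h ^+ 2 * p a.
  by rewrite /centred_log -/h; ring.
under eq_bigr do rewrite expand.
rewrite !big_split /= -!mulr_sumr p1 /bern_variance.
rewrite (_ : \sum_a p a * ln (p a) = - h); first by ring.
by rewrite opprK.
Qed.

Lemma ln_bernoulli_cyl (i : Sigma K) n :
  ln (fine (mu (cyl i n))) + bern_entropy p * n%:R = \sum_(m < n) centred_log (i m).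
Proof.
case: hp => p0 _; rewrite hmu /= ln_prod // big_split /=.
by rewrite sumr_const card_ord mulr_natr.
Qed.

Lemma bernoulli_chebyshev n (c : R) : 0 < c ->
  (mu [set i : Sigma K | (c < \sum_(m < n) centred_log (i m))%R]
    <= (n%:R * bern_variance p / c ^+ 2)%:E)%E.
Proof.
move=> c0; case: hp => p0 p1.
set E := [set i | _]; have dE : prefix_determined n E.
  by move=> i j ij; rewrite /E /= (prefix_eq_sum _ ij).
apply: le_trans (bernoulli_prefix_determined_le dE) _; rewrite lee_fin.
rewrite (eq_bigl (fun w : {ffun 'I_n -> Alph K} => c < \sum_(m < n) centred_log (w m)))
  => [|w]; last first.
  have sumE : \sum_(m < n) centred_log (word_seq w m) = \sum_(m < n) centred_log (w m).
    by apply: eq_bigr => m _; rewrite word_seqE.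
  by apply/idP/idP; rewrite in_setE /E /= sumE.
rewrite -centred_log_variance.
by apply: iid_sum_chebyshev => // [a|]; [exact: ltW | exact: centred_log_mean].
Qed.

End BernoulliSums.

Theorem lemma6p1 (R : realType) (K : nat) (hK : (2 <= K)%N)
  (p : Alph K -> R) (hp : is_prob_vector p) (hnu : non_uniform p)
  (mu : probability (Sigma K) R) (hmu : is_bernoulli p mu)
  (g : nat -> R) (hg1 : forall n, 1 <= g n)
  (hgsup : (limn_esup (fun n => (g n / Num.sqrt (loglog n))%:E) <= 1%:E)%E)
  (hginf : g @ \oo --> +oo) :
  exists nk : nat -> nat, (forall k, (0 < nk k)%N) /\
    mu [set i : Sigma K |
          (limn_esup (fun k =>
             ((ln (fine (mu (cyl i (nk k)))) + bern_entropy p * (nk k)%:R)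
              / (Num.sqrt (2 * bern_variance p * (nk k)%:R) * g (nk k)))%:E)
           <= (2^-1)%:E)%E] = 1%E.
Proof.
have [nk [nk_gt0 g_nk]] := cvgry_subseq (fun k => (2 ^ k.+1)%:R) hginf.
exists nk; split => //; set rho := bern_variance p.
have lnE k i := ln_bernoulli_cyl hp hmu i (nk k).
have [rho_le0|rho_gt0] := leP rho 0.
  rewrite (_ : [set i | _] = setT) ?probability_setT //; apply/seteqP; split => // i _.
  apply: limn_esup_le_near; apply: nearW => k.
  rewrite (_ : Num.sqrt _ = 0) ?mul0r ?invr0 ?mulr0 ?lee_fin ?invr_ge0 //.
  by apply/eqP; rewrite sqrtr_eq0 -mulrA pmulr_rle0 // mulr_le0_ge0.
have D_gt0 k : 0 < Num.sqrt (2 * rho * (nk k)%:R) * g (nk k).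
  by rewrite mulr_gt0 ?sqrtr_gt0 ?mulr_gt0 ?ltr0n // (lt_le_trans ltr01).
pose E k := [set i : Sigma K | (Num.sqrt (2 * rho * (nk k)%:R) * g (nk k) / 2
                                < \sum_(m < nk k) centred_log p (i m))%R].
apply: (probability_eventually_avoided (E := E)).
- move=> k; apply: (@prefix_determined_measurable _ (nk k)) => i j ij.
  by rewrite /E /= (prefix_eq_sum _ ij).
- move=> k; apply: le_trans (bernoulli_chebyshev hp hmu _ _) _; first by rewrite divr_gt0.
  rewrite lee_fin chebyshev_normalised_bound ?ltr0n //.
  by rewrite (ler_nat _ 2) -[2%N]expn1 leq_exp2l.
- apply: (@prefix_determined_limn_esup_le _ _ nk) => k i j ij.
  by rewrite !lnE (prefix_eq_sum _ ij).
- move=> i avoid; apply: limn_esup_le_near; apply: filterS avoid => k /negP.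
  by rewrite -leNgt lee_fin lnE ler_pdivrMr // mulrC.
Qed.
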